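(* Let $K$ be a field with $\operatorname{char}(K)\neq2$ and let $(C_1,C_0,s,t,e,k,(\tau,\psi))$ be a braided categorical Leibniz $K$-algebra. Then $(\ker(s),C_0,({}^e\cdot,\cdot^e),\partial_t,(\{-,-\}_\tau,\langle-,-\rangle_\psi))$ is a braided crossed module of Leibniz $K$-algebras, where for $a,b\in C_0$, $x\in\ker(s)$: $a\,{}^e\cdot\,x=[e(a),x]$, $x\cdot^e a=[x,e(a)]$, $\partial_t=t|_{\ker(s)}$, $\{a,b\}_\tau=\frac{e([a,b])-\tau_{a,b}}{2}$ and $\langle a,b\rangle_\psi=\frac{e([a,b])-\psi_{a,b}}{2}$.
   Context: A Leibniz $K$-algebra: bilinear bracket with $[x,[y,z]]=[[x,y],z]-[[x,z],y]$. Categorical Leibniz algebra $(C_1,C_0,s,t,e,k)$: Leibniz homomorphisms $s,t\colon C_1\to C_0$, $e\colon C_0\to C_1$, $k\colon C_1\times_{C_0}C_1=\{(x,y):t(x)=s(y)\}\to C_1$ forming an internal category ($se=te=\mathrm{Id}$, $sk(x,y)=s(x)$, $tk(x,y)=t(y)$, $k(es(x),x)=x=k(x,et(x))$, $k$ associative). Braiding on it: bilinear $\tau,\psi\colon C_0\times C_0\to C_1$ with, for all $a,b,c\in C_0$, $x,y\in C_1$: $s(\tau_{a,b})=s(\psi_{a,b})=[a,b]$, $t(\tau_{a,b})=t(\psi_{a,b})=-[a,b]$; $k([x,y],\tau_{t(x),t(y)})=k(\tau_{s(x),s(y)},-[x,y])$ and likewise for $\psi$; $\tau_{a,[b,c]}=\tau_{[a,b],c}-\tau_{[a,c],b}$;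 $\psi_{a,[b,c]}=\tau_{[a,b],c}-\psi_{[a,c],b}$; $\tau_{a,[b,c]}=\tau_{[a,b],c}-\psi_{[a,c],b}$; $\psi_{a,[b,c]}=\psi_{[a,b],c}-\psi_{[a,c],b}$. Leibniz action of $N$ on $M$: bilinear $\cdot_1\colon N\times M\to M$, $\cdot_2\colon M\times N\to M$ with $n\cdot_1[m,m']=[n\cdot_1m,m']-[n\cdot_1m',m]$; $[m,n\cdot_1m']=[m\cdot_2n,m']-[m,m']\cdot_2n$; $[m,m'\cdot_2n]=[m,m']\cdot_2n-[m\cdot_2n,m']$; $m\cdot_2[n,n']=(m\cdot_2n)\cdot_2n'-(m\cdot_2n')\cdot_2n$; $n\cdot_1(m\cdot_2n')=(n\cdot_1m)\cdot_2n'-[n,n']\cdot_1m$; $n\cdot_1(n'\cdot_1m)=[n,n']\cdot_1m-(n\cdot_1m)\cdot_2n'$. Crossed module $(M,N,(\cdot_1,\cdot_2),\partial)$: such an action with Leibniz homomorphism $\partial\colon M\to N$, $\partial(n\cdot_1m)=[n,\partial m]$, $\partial(m\cdot_2n)=[\partial m,n]$, $\partial(m)\cdot_1m'=[m,m']=m\cdot_2\partial(m')$. Braiding on it: bilinear $\{-,-\},\langle-,-\rangle\colon N\times N\to M$ with $\partial\{n,n'\}=[n,n']=\partial\langle n,n'\rangle$; $\{\partial m,\partial m'\}=[m,m']=\langle\partial m,\partial m'\rangle$; $\{\partial m,n\}=m\cdot_2n=\langle\partial m,n\rangle$; $\{n,\partial m\}=n\cdot_1m=\langle n,\partial m\rangle$;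 $\{n,[n',n'']\}=\{[n,n'],n''\}-\{[n,n''],n'\}$; $\langle n,[n',n'']\rangle=\{[n,n'],n''\}-\langle[n,n''],n'\rangle$; $\{n,[n',n'']\}=\{[n,n'],n''\}-\langle[n,n''],n'\rangle$; $\langle n,[n',n'']\rangle=\langle[n,n'],n''\rangle-\langle[n,n''],n'\rangle$. *)

From HB Require Import structures.
From mathcomp Require Import all_boot all_algebra.
Set Implicit Arguments. Unset Strict Implicit. Unset Printing Implicit Defensive.
Import GRing.Theory.
Local Open Scope ring_scope.

Definition bilinear_op (K : fieldType) (U V W : lmodType K) (f : U -> V -> W) : Prop :=
  (forall (a : K) x y z, f (a *: x + y) z = a *: f x z + f y z) /\
  (forall (a : K) x y z, f x (a *: y + z) = a *: f x y + f x z).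

Definition leibniz_alg (K : fieldType) (V : lmodType K) (br : V -> V -> V) : Prop :=
  bilinear_op br /\
  forall x y z, br x (br y z) = br (br x y) z - br (br x z) y.

Definition leibniz_hom (K : fieldType) (U V : lmodType K)
  (brU : U -> U -> U) (brV : V -> V -> V) (f : {linear U -> V}) : Prop :=
  forall x y, f (brU x y) = brV (f x) (f y).

(* The composition k is
   defined on the pullback C1 x_{C0} C1 = {(x,y) | t x = s y}; we model it as a
   function C1 -> C1 -> C1 whose values are only constrained on composable
   pairs, and require it to be a Leibniz homomorphism on that subalgebra. *)
Record cat_leibniz (K : fieldType) (C1 C0 : lmodType K)
  (br1 : C1 -> C1 -> C1) (br0 : C0 -> C0 -> C0)
  (s t : {linear C1 -> C0}) (e : {linear C0 -> C1}) (k : C1 -> C1 -> C1) : Prop := {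
  cl_alg1 : leibniz_alg br1;
  cl_alg0 : leibniz_alg br0;
  cl_s_hom : leibniz_hom br1 br0 s;
  cl_t_hom : leibniz_hom br1 br0 t;
  cl_e_hom : leibniz_hom br0 br1 e;
  cl_k_lin : forall (a : K) x y x' y', t x = s y -> t x' = s y' ->
               k (a *: x + x') (a *: y + y') = a *: k x y + k x' y';
  cl_k_br : forall x y x' y', t x = s y -> t x' = s y' ->
               k (br1 x x') (br1 y y') = br1 (k x y) (k x' y');
  cl_se : forall a, s (e a) = a;
  cl_te : forall a, t (e a) = a;
  cl_sk : forall x y, t x = s y -> s (k x y) = s x;
  cl_tk : forall x y, t x = s y -> t (k x y) = t y;
  cl_kl : forall x, k (e (s x)) x = x;
  cl_kr : forall x, k x (e (t x)) = x;
  cl_kassoc : forall x y z, t x = s y -> t y = s z -> k (k x y) z = k x (k y z)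
}.

Record cat_braiding (K : fieldType) (C1 C0 : lmodType K)
  (br1 : C1 -> C1 -> C1) (br0 : C0 -> C0 -> C0)
  (s t : {linear C1 -> C0}) (e : {linear C0 -> C1}) (k : C1 -> C1 -> C1)
  (tau psi : C0 -> C0 -> C1) : Prop := {
  cb_tau_bil : bilinear_op tau;
  cb_psi_bil : bilinear_op psi;
  cb_s_tau : forall a b, s (tau a b) = br0 a b;
  cb_s_psi : forall a b, s (psi a b) = br0 a b;
  cb_t_tau : forall a b, t (tau a b) = - br0 a b;
  cb_t_psi : forall a b, t (psi a b) = - br0 a b;
  cb_nat_tau : forall x y, k (br1 x y) (tau (t x) (t y)) = k (tau (s x) (s y)) (- br1 x y);
  cb_nat_psi : forall x y, k (br1 x y) (psi (t x) (t y)) = k (psi (s x) (s y)) (- br1 x y);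
  cb_1 : forall a b c, tau a (br0 b c) = tau (br0 a b) c - tau (br0 a c) b;
  cb_2 : forall a b c, psi a (br0 b c) = tau (br0 a b) c - psi (br0 a c) b;
  cb_3 : forall a b c, tau a (br0 b c) = tau (br0 a b) c - psi (br0 a c) b;
  cb_4 : forall a b c, psi a (br0 b c) = psi (br0 a b) c - psi (br0 a c) b
}.

Definition braided_cat_leibniz (K : fieldType) (C1 C0 : lmodType K)
  br1 br0 s t e k tau psi : Prop :=
  @cat_leibniz K C1 C0 br1 br0 s t e k /\ @cat_braiding K C1 C0 br1 br0 s t e k tau psi.

Record leibniz_action (K : fieldType) (M N : lmodType K)
  (brM : M -> M -> M) (brN : N -> N -> N)
  (act1 : N -> M -> M) (act2 : M -> N -> M) : Prop := {
  la_bil1 : bilinear_op act1;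
  la_bil2 : bilinear_op act2;
  la_1 : forall n m m', act1 n (brM m m') = brM (act1 n m) m' - brM (act1 n m') m;
  la_2 : forall n m m', brM m (act1 n m') = brM (act2 m n) m' - act2 (brM m m') n;
  la_3 : forall n m m', brM m (act2 m' n) = act2 (brM m m') n - brM (act2 m n) m';
  la_4 : forall m n n', act2 m (brN n n') = act2 (act2 m n) n' - act2 (act2 m n') n;
  la_5 : forall n n' m, act1 n (act2 m n') = act2 (act1 n m) n' - act1 (brN n n') m;
  la_6 : forall n n' m, act1 n (act1 n' m) = act1 (brN n n') m - act2 (act1 n m) n'
}.

Record crossed_module (K : fieldType) (M N : lmodType K)
  (brM : M -> M -> M) (brN : N -> N -> N)
  (act1 : N -> M -> M) (act2 : M -> N -> M) (d : {linear M -> N}) : Prop := {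
  cm_algM : leibniz_alg brM;
  cm_algN : leibniz_alg brN;
  cm_action : leibniz_action brM brN act1 act2;
  cm_d_hom : leibniz_hom brM brN d;
  cm_d_act1 : forall n m, d (act1 n m) = brN n (d m);
  cm_d_act2 : forall m n, d (act2 m n) = brN (d m) n;
  cm_peiffer1 : forall m m', act1 (d m) m' = brM m m';
  cm_peiffer2 : forall m m', act2 m (d m') = brM m m'
}.

Record cm_braiding (K : fieldType) (M N : lmodType K)
  (brM : M -> M -> M) (brN : N -> N -> N)
  (act1 : N -> M -> M) (act2 : M -> N -> M) (d : {linear M -> N})
  (brace angle : N -> N -> M) : Prop := {
  cmb_bil1 : bilinear_op brace;
  cmb_bil2 : bilinear_op angle;
  cmb_d1 : forall n n', d (brace n n') = brN n n';
  cmb_d2 : forall n n', d (angle n n') = brN n n';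
  cmb_dd1 : forall m m', brace (d m) (d m') = brM m m';
  cmb_dd2 : forall m m', angle (d m) (d m') = brM m m';
  cmb_l1 : forall m n, brace (d m) n = act2 m n;
  cmb_l2 : forall m n, angle (d m) n = act2 m n;
  cmb_r1 : forall n m, brace n (d m) = act1 n m;
  cmb_r2 : forall n m, angle n (d m) = act1 n m;
  cmb_1 : forall n n' n'', brace n (brN n' n'') = brace (brN n n') n'' - brace (brN n n'') n';
  cmb_2 : forall n n' n'', angle n (brN n' n'') = brace (brN n n') n'' - angle (brN n n'') n';
  cmb_3 : forall n n' n'', brace n (brN n' n'') = brace (brN n n') n'' - angle (brN n n'') n';
  cmb_4 : forall n n' n'', angle n (brN n' n'') = angle (brN n n') n'' - angle (brN n n'') n'
}.

Definition braided_crossed_module (K : fieldType) (M N : lmodType K)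
  brM brN act1 act2 d brace angle : Prop :=
  @crossed_module K M N brM brN act1 act2 d /\
  @cm_braiding K M N brM brN act1 act2 d brace angle.

Section Kernel.
Variables (K : fieldType) (C1 C0 : lmodType K) (s : {linear C1 -> C0}).

Definition ker_pred : {pred C1} := fun x => s x == 0.

Fact ker_submod_closed : submod_closed ker_pred.
Proof.
split; first by rewrite /ker_pred unfold_in /= linear0.
by move=> a x y; rewrite /ker_pred !unfold_in /= linearP => /eqP -> /eqP ->; rewrite scaler0 addr0.
Qed.

HB.instance Definition _ := GRing.isSubmodClosed.Build K C1 ker_pred ker_submod_closed.

Record kerT := KerT { kerval :> C1; _ : kerval \in ker_pred }.
HB.instance Definition _ := [isSub for kerval].
HB.instance Definition _ := [Choice of kerT by <:].
HB.instance Definition _ := [SubChoice_isSubLmodule of kerT by <:].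

Definition ker_restr (f : {linear C1 -> C0}) (x : kerT) : C0 := f (val x).
Fact ker_restr_linear f : linear (ker_restr f).
Proof. by move=> a x y; rewrite /ker_restr /= linearP. Qed.
HB.instance Definition _ f := GRing.isLinear.Build K kerT C0 _ (ker_restr f) (ker_restr_linear f).
End Kernel.

(* Values in C1 are cast into ker s via insubd 0; under the
   hypotheses of the theorem these values do lie in ker s, so insubd is
   just the corestriction. *)
Section Induced.
Variables (K : fieldType) (C1 C0 : lmodType K) (br1 : C1 -> C1 -> C1)
  (s : {linear C1 -> C0}) (e : {linear C0 -> C1}).

Definition ker_br (x y : kerT s) : kerT s := insubd 0 (br1 (val x) (val y)).
Definition e_act1 (a : C0) (x : kerT s) : kerT s := insubd 0 (br1 (e a) (val x)).
Definition e_act2 (x : kerT s) (a : C0) : kerT s := insubd 0 (br1 (val x) (e a)).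
Definition half_braid (br0 : C0 -> C0 -> C0) (tau : C0 -> C0 -> C1) (a b : C0) : kerT s :=
  insubd 0 ((2%:R : K)^-1 *: (e (br0 a b) - tau a b)).
End Induced.

From HB Require Import structures.
From mathcomp Require Import all_boot all_algebra.
Import GRing.Theory.
Local Open Scope ring_scope.
Set Implicit Arguments.

(* In a categorical Leibniz algebra the composition is forced by linearity and
   the unit laws: k(x, y) = x + y - e(t x).  Since k preserves brackets, the
   composable pairs (x, 0) and (0, y) with t x = 0 = s y give [x, y] = 0, and
   symmetrically; i.e. [ker t, ker s] = [ker s, ker t] = 0, which yields the
   Peiffer identities for the action a.x = [e a, x], x.a = [x, e a].
   Likewise naturality of a braiding f, for x, y one of which lies in ker s,
   reads e([t x, t y]) - f(t x, t y) = 2[x, y]; halving this gives the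
   equations {t m, t m'} = [m, m'], {t m, a} = m.a and {a, t m} = a.m.  All
   other axioms are those of C1, C0, tau and psi transported into ker s. *)

Section Bilinear.
Variables (K : fieldType) (U V W : lmodType K) (f : U -> V -> W).
Hypothesis f_bil : bilinear_op f.

Lemma bil0l z : f 0 z = 0.
Proof.
have := f_bil.1 1 0 0 z; rewrite !scale1r addr0 -{1}[f 0 z]addr0.
by move/addrI.
Qed.

Lemma bil0r z : f z 0 = 0.
Proof.
have := f_bil.2 1 z 0 0; rewrite !scale1r addr0 -{1}[f z 0]addr0.
by move/addrI.
Qed.

Lemma bilBl x y z : f (x - y) z = f x z - f y z.
Proof. by rewrite (addrC x) -scaleN1r f_bil.1 scaleN1r addrC. Qed.

Lemma bilBr x y z : f z (x - y) = f z x - f z y.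
Proof. by rewrite (addrC x) -scaleN1r f_bil.2 scaleN1r addrC. Qed.

End Bilinear.

Section KernelOfSource.
Variables (K : fieldType) (C1 C0 : lmodType K) (s : {linear C1 -> C0}).

Lemma insubd_kerE x : s x = 0 -> val (insubd 0 x : kerT s) = x.
Proof. by move=> sx0; rewrite insubdK // /in_mem /= /ker_pred sx0. Qed.

Lemma s_val_ker (m : kerT s) : s (val m) = 0.
Proof. by case: m => x /= /eqP. Qed.

Lemma ker_restrE (f : {linear C1 -> C0}) (m : kerT s) : ker_restr f m = f (val m).
Proof. by []. Qed.

End KernelOfSource.

Section BilinearTransfer.
Variables (K : fieldType) (U V W W' : lmodType K).

Lemma bilinear_comp (U' V' : lmodType K) (f : U' -> V' -> W)
    (g : {linear U -> U'}) (h : {linear V -> V'}) :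
  bilinear_op f -> bilinear_op (fun x y => f (g x) (h y)).
Proof. by move=> [fl fr]; split=> a x y z; rewrite linearP ?fl ?fr. Qed.

Lemma bilinear_linear_inj {g : U -> V -> W} {h : U -> V -> W'} {f : {linear W -> W'}} :
  injective f -> (forall x y, f (g x y) = h x y) -> bilinear_op h -> bilinear_op g.
Proof.
by move=> f_inj gE [hl hr]; split=> a x y z; apply: f_inj; rewrite linearP !gE ?hl ?hr.
Qed.

End BilinearTransfer.

Section CategoricalLeibniz.
Variables (K : fieldType) (C1 C0 : lmodType K)
  (br1 : C1 -> C1 -> C1) (br0 : C0 -> C0 -> C0)
  (s t : {linear C1 -> C0}) (e : {linear C0 -> C1}) (k : C1 -> C1 -> C1).
Hypothesis hC : cat_leibniz br1 br0 s t e k.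

Lemma cat_compE x y : t x = s y -> k x y = x + y - e (t x).
Proof.
move=> txy; set z := y - e (t x).
have sz0 : s z = 0 by rewrite linearB /= (cl_se hC) txy subrr.
have -> : k x y = k (1 *: x + 0) (1 *: e (t x) + z) by rewrite !scale1r addr0 addrC subrK.
rewrite (cl_k_lin hC) ?(cl_se hC) ?linear0 // !scale1r (cl_kr hC).
by rewrite -[in k 0 z](linear0 e) -sz0 (cl_kl hC) addrA.
Qed.

Lemma br_ker_t_ker_s x y : t x = 0 -> s y = 0 -> br1 x y = 0.
Proof.
move=> tx0 sy0; have := cl_k_br hC (x:=x) (y:=0) (x':=0) (y':=y).
rewrite tx0 sy0 !linear0 (bil0r (cl_alg1 hC).1) (bil0l (cl_alg1 hC).1) => /(_ erefl erefl).
by rewrite !cat_compE ?tx0 ?linear0 // !addr0 add0r => <-.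
Qed.

Lemma br_ker_s_ker_t x y : s x = 0 -> t y = 0 -> br1 x y = 0.
Proof.
move=> sx0 ty0; have := cl_k_br hC (x:=0) (y:=x) (x':=y) (y':=0).
rewrite ty0 sx0 !linear0 (bil0r (cl_alg1 hC).1) (bil0l (cl_alg1 hC).1) => /(_ erefl erefl).
by rewrite !cat_compE ?ty0 ?linear0 // !addr0 add0r => <-.
Qed.

Lemma s_br_kerl x y : s x = 0 -> s (br1 x y) = 0.
Proof. by move=> sx0; rewrite (cl_s_hom hC) sx0 (bil0l (cl_alg0 hC).1). Qed.

Lemma s_br_kerr x y : s y = 0 -> s (br1 x y) = 0.
Proof. by move=> sy0; rewrite (cl_s_hom hC) sy0 (bil0r (cl_alg0 hC).1). Qed.

Variable f : C0 -> C0 -> C1.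
Hypotheses (s_f : forall a b, s (f a b) = br0 a b)
  (nat_f : forall x y, k (br1 x y) (f (t x) (t y)) = k (f (s x) (s y)) (- br1 x y)).

Lemma braid_naturality_twice x y : f (s x) (s y) = 0 -> s (br1 x y) = 0 ->
  e (br0 (t x) (t y)) - f (t x) (t y) = br1 x y *+ 2.
Proof.
move=> f0 sxy0; have := nat_f x y.
rewrite f0 !cat_compE ?s_f ?(cl_t_hom hC) ?linear0 ?linearN ?sxy0 ?oppr0 // .
rewrite addr0 add0r => nat_xy.
rewrite mulr2n -{1}(opprK (br1 x y)) -nat_xy.
by rewrite opprB opprD addrA addrAC subrK.
Qed.

End CategoricalLeibniz.

Section KernelCrossedModule.
Variables (K : fieldType) (C1 C0 : lmodType K)
  (br1 : C1 -> C1 -> C1) (br0 : C0 -> C0 -> C0)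
  (s t : {linear C1 -> C0}) (e : {linear C0 -> C1}) (k : C1 -> C1 -> C1).
Hypothesis hC : cat_leibniz br1 br0 s t e k.

Lemma ker_brE (x y : kerT s) : val (ker_br br1 x y) = br1 (val x) (val y).
Proof. exact/insubd_kerE/(s_br_kerl hC)/s_val_ker. Qed.

Lemma e_act1E a (x : kerT s) : val (e_act1 br1 e a x) = br1 (e a) (val x).
Proof. exact/insubd_kerE/(s_br_kerr hC)/s_val_ker. Qed.

Lemma e_act2E (x : kerT s) a : val (e_act2 br1 e x a) = br1 (val x) (e a).
Proof. exact/insubd_kerE/(s_br_kerl hC)/s_val_ker. Qed.

Lemma half_braidE {f : C0 -> C0 -> C1} : (forall a b, s (f a b) = br0 a b) ->
  forall a b, val (half_braid s e br0 f a b) = (2%:R : K)^-1 *: (e (br0 a b) - f a b).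
Proof.
by move=> s_f a b; apply: insubd_kerE; rewrite linearZ linearB /= (cl_se hC) s_f subrr scaler0.
Qed.

Lemma ker_br_leibniz : leibniz_alg (ker_br br1 (s:=s)).
Proof.
have [br1_bil br1_leibniz] := cl_alg1 hC.
split; first exact: (bilinear_linear_inj val_inj ker_brE (bilinear_comp val val br1_bil)).
by move=> x y z; apply: val_inj; rewrite linearB /= !ker_brE br1_leibniz.
Qed.

Lemma e_act_leibniz_action :
  leibniz_action (ker_br br1 (s:=s)) br0 (e_act1 br1 e) (e_act2 br1 e).
Proof.
have [br1_bil br1_leibniz] := cl_alg1 hC.
split.
- exact: (bilinear_linear_inj val_inj e_act1E (bilinear_comp e val br1_bil)).
- exact: (bilinear_linear_inj val_inj e_act2E (bilinear_comp val e br1_bil)).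
all: by move=> ? ? ?; apply: val_inj;
  rewrite linearB /= !(ker_brE, e_act1E, e_act2E) ?(cl_e_hom hC) br1_leibniz.
Qed.

Lemma ker_crossed_module : crossed_module (ker_br br1 (s:=s)) br0
  (e_act1 br1 e) (e_act2 br1 e) (ker_restr t).
Proof.
split.
- exact: ker_br_leibniz.
- exact: cl_alg0 hC.
- exact: e_act_leibniz_action.
- by move=> x y; rewrite /= !ker_restrE ker_brE (cl_t_hom hC).
- by move=> a x; rewrite /= !ker_restrE e_act1E (cl_t_hom hC) (cl_te hC).
- by move=> x a; rewrite /= !ker_restrE e_act2E (cl_t_hom hC) (cl_te hC).
- move=> x y; apply: val_inj; rewrite /= e_act1E ker_restrE ker_brE /=.
  apply/esym/subr0_eq; rewrite -bilBl; last exact: (cl_alg1 hC).1.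
  by apply: (br_ker_t_ker_s hC); rewrite ?s_val_ker // linearB /= (cl_te hC) subrr.
- move=> x y; apply: val_inj; rewrite /= e_act2E ker_restrE ker_brE /=.
  apply/esym/subr0_eq; rewrite -bilBr; last exact: (cl_alg1 hC).1.
  by apply: (br_ker_s_ker_t hC); rewrite ?s_val_ker // linearB /= (cl_te hC) subrr.
Qed.

Lemma half_braid_leibniz {f g h : C0 -> C0 -> C1} :
    (forall a b, s (f a b) = br0 a b) -> (forall a b, s (g a b) = br0 a b) ->
    (forall a b, s (h a b) = br0 a b) ->
    (forall a b c, f a (br0 b c) = g (br0 a b) c - h (br0 a c) b) ->
  forall a b c, half_braid s e br0 f a (br0 b c)
    = half_braid s e br0 g (br0 a b) c - half_braid s e br0 h (br0 a c) b.
Proof.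
move=> s_f s_g s_h fgh a b c; apply: val_inj.
rewrite linearB /= !(half_braidE s_f, half_braidE s_g, half_braidE s_h) -scalerBr.
by rewrite (cl_alg0 hC).2 fgh (linearB e) !opprD !opprK addrACA.
Qed.

Hypothesis char_K : 2 \notin [pchar K].

Lemma scale_half_mulr2n (V : lmodType K) (v : V) : (2%:R : K)^-1 *: (v *+ 2) = v.
Proof.
have two_neq0 : (2%:R : K) != 0 by move: char_K; rewrite inE.
by rewrite -scaler_nat scalerA mulVf ?scale1r.
Qed.

Variable f : C0 -> C0 -> C1.
Hypotheses (f_bil : bilinear_op f) (s_f : forall a b, s (f a b) = br0 a b)
  (t_f : forall a b, t (f a b) = - br0 a b)
  (nat_f : forall x y, k (br1 x y) (f (t x) (t y)) = k (f (s x) (s y)) (- br1 x y)).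

Lemma half_braid_bilinear : bilinear_op (half_braid s e br0 f).
Proof.
have [br0_bil _] := cl_alg0 hC.
apply: (bilinear_linear_inj val_inj (half_braidE s_f)).
split=> a x y z; rewrite ?(br0_bil.1, br0_bil.2, f_bil.1, f_bil.2) linearP.
all: by rewrite scalerA mulrC -scalerA -scalerDr opprD addrACA scalerBr.
Qed.

Lemma ker_restr_half_braid a b : ker_restr t (half_braid s e br0 f a b) = br0 a b.
Proof.
rewrite ker_restrE (half_braidE s_f) linearZ linearB /= (cl_te hC) t_f opprK.
by rewrite -mulr2n scale_half_mulr2n.
Qed.

Lemma val_half_braid_t x y : s x = 0 \/ s y = 0 ->
  val (half_braid s e br0 f (t x) (t y)) = br1 x y.
Proof.
move=> sxy0.
have f0 : f (s x) (s y) = 0 by case: sxy0 => ->; rewrite ?bil0l ?bil0r.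
have sbr0 : s (br1 x y) = 0 by case: sxy0; [exact: (s_br_kerl hC) | exact: (s_br_kerr hC)].
by rewrite (half_braidE s_f) (braid_naturality_twice hC) ?scale_half_mulr2n.
Qed.

Lemma half_braid_ker (x y : kerT s) :
  half_braid s e br0 f (ker_restr t x) (ker_restr t y) = ker_br br1 x y.
Proof.
by apply: val_inj; rewrite !ker_restrE ker_brE val_half_braid_t //; left; apply: s_val_ker.
Qed.

Lemma half_braid_kerl (x : kerT s) a :
  half_braid s e br0 f (ker_restr t x) a = e_act2 br1 e x a.
Proof.
apply: val_inj; rewrite ker_restrE e_act2E -{1}[a](cl_te hC).
by rewrite val_half_braid_t //; left; apply: s_val_ker.
Qed.

Lemma half_braid_kerr a (x : kerT s) :
  half_braid s e br0 f a (ker_restr t x) = e_act1 br1 e a x.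
Proof.
apply: val_inj; rewrite ker_restrE e_act1E -{1}[a](cl_te hC).
by rewrite val_half_braid_t //; right; apply: s_val_ker.
Qed.

End KernelCrossedModule.

Theorem mainTheorem4 (K : fieldType) (C1 C0 : lmodType K)
  (br1 : C1 -> C1 -> C1) (br0 : C0 -> C0 -> C0)
  (s t : {linear C1 -> C0}) (e : {linear C0 -> C1}) (k : C1 -> C1 -> C1)
  (tau psi : C0 -> C0 -> C1) :
  2 \notin [pchar K] ->
  braided_cat_leibniz br1 br0 s t e k tau psi ->
  braided_crossed_module (@ker_br K C1 C0 br1 s) br0
    (@e_act1 K C1 C0 br1 s e) (@e_act2 K C1 C0 br1 s e) (@ker_restr K C1 C0 s t)
    (@half_braid K C1 C0 s e br0 tau) (@half_braid K C1 C0 s e br0 psi).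
Proof.
move=> char_K [hC [*]].
split; first exact: ker_crossed_module hC.
split; by [ apply: (half_braid_bilinear hC) | apply: (ker_restr_half_braid hC char_K)
          | apply: (half_braid_ker hC char_K) | apply: (half_braid_kerl hC char_K)
          | apply: (half_braid_kerr hC char_K) | apply: (half_braid_leibniz hC) ].
Qed.
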